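(* Let $F$ be an infinite field, $n>1$ an integer, and $p\in F[x]$ a nonconstant polynomial. Then every noncentral matrix in $\mathrm{M}_n(F)$ with trace zero belongs to $p[\mathrm{M}_n(F),\mathrm{M}_n(F)]=\{p(AB)-p(BA)\mid A,B\in\mathrm{M}_n(F)\}$. Moreover, if $F$ has characteristic zero, then $$p[\mathrm{M}_n(F),\mathrm{M}_n(F)]=\{A\in\mathrm{M}_n(F)\mid \mathrm{trace}(A)=0\}.$$ *)

From mathcomp Require Import all_boot all_algebra.
Set Implicit Arguments. Unset Strict Implicit. Unset Printing Implicit Defensive.
Import GRing.Theory.
Local Open Scope ring_scope.

Definition infinite_field (F : fieldType) : Prop :=
  forall s : seq F, exists x : F, x \notin s.

(* Matrices of size n.+1 (so that 'M_n.+1 is a ring); p[M,M] is the image set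
   {p(AB) - p(BA)} where p(X) is polynomial evaluation at a matrix (horner_mx). *)
Definition p_commutator_image (F : fieldType) (n : nat) (p : {poly F})
  (M : 'M[F]_n.+1) : Prop :=
  exists A B : 'M[F]_n.+1, M = horner_mx (A *m B) p - horner_mx (B *m A) p.

(* By Fillmore's theorem a non-scalar matrix of trace zero is similar to a
   matrix N with zero diagonal, and p[M_n, M_n] is closed under similarity.
   As F is infinite there are x_1, ..., x_n with p(x_1), ..., p(x_n) pairwise
   distinct; put X = diag(x_i). Let W be upper triangular with diagonal p(x_i)
   and with the strictly upper part of N. Then W and W - N are triangular with
   the same n distinct eigenvalues p(x_i), so W = P^-1 p(X) P and
   W - N = Q^-1 p(X) Q, and A = P^-1 Q, B = Q^-1 X P give
   p(AB) - p(BA) = W - (W - N) = N. Conversely tr p(AB) = tr p(BA), and in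
   characteristic zero the only scalar matrix of trace zero is 0 = p(0) - p(0). *)

From mathcomp Require Import all_boot all_algebra.
From mathcomp Require Import ring fingroup perm.
Import GRing.Theory.
Local Open Scope ring_scope.

Set Implicit Arguments. Unset Strict Implicit. Unset Printing Implicit Defensive.

Section Similarity.
Variables (F : fieldType) (n : nat).
Implicit Types (M N L P Q : 'M[F]_n).

Lemma simmx_mulmx P Q M : Q *m P = 1%:M -> M ~_{in unitmx} P *m M *m Q.
Proof.
move=> QP; have [_ Pu] := mulmx1_unit QP.
by exists P => //; apply/simmxP => //; rewrite -mulmxA QP mulmx1.
Qed.

Lemma simmx_refl M : M ~_{in unitmx} M.
Proof.
by exists 1%:M; rewrite ?unitmx1 //; apply/simmxP; rewrite ?unitmx1 ?mul1mx ?mulmx1.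
Qed.

Lemma simmx_trans M N L :
  M ~_{in unitmx} N -> N ~_{in unitmx} L -> M ~_{in unitmx} L.
Proof.
move=> [P Pu /(simmxRL Pu) ->] [Q Qu /(simmxRL Qu) ->].
rewrite !mulmxA -(mulmxA _ (invmx P)); apply: simmx_mulmx.
by rewrite mulmxA -(mulmxA _ (invmx Q)) mulVmx // mulmx1 mulVmx.
Qed.

Lemma simmx_mxtrace M N : M ~_{in unitmx} N -> \tr N = \tr M.
Proof. by move=> [P Pu /(simmxRL Pu) ->]; rewrite mxtrace_mulC mulmxA mulVmx ?mul1mx. Qed.

Lemma simmx_perm (s : 'S_n) M : M ~_{in unitmx} \matrix_(x, y) M (s x) (s y).
Proof.
have -> : \matrix_(x, y) M (s x) (s y) = perm_mx s *m M *m perm_mx s^-1.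
  by rewrite -row_permE -col_permE; apply/matrixP => x y; rewrite !mxE.
by apply: simmx_mulmx; rewrite -perm_mxM mulVg perm_mx1.
Qed.

Definition elemmx (i j : 'I_n) (t : F) : 'M[F]_n := 1%:M + t *: delta_mx i j.

Lemma simmx_elemmx i j t M : i != j ->
  M ~_{in unitmx} elemmx i j t *m M *m elemmx i j (- t).
Proof.
move=> ij; apply: simmx_mulmx; rewrite /elemmx.
rewrite mulmxDl !mulmxDr !mul1mx !mulmx1 -scalemxAl -scalemxAr mul_delta_mx_0 1?eq_sym //.
by rewrite !scaler0 addr0 scaleNr addrK.
Qed.

Lemma elemmx_conjE i j t M x y :
  (elemmx i j t *m M *m elemmx i j (- t)) x y =
  M x y + t * ((x == i)%:R * M j y) - t * (M x i * (y == j)%:R)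
    - t ^+ 2 * ((x == i)%:R * M j i * (y == j)%:R).
Proof.
have dM (N : 'M[F]_n) u v : (delta_mx i j *m N) u v = (u == i)%:R * N j v.
  rewrite mxE (bigD1 j) //= big1 => [|k /negPf kj]; rewrite !mxE ?eqxx ?andbT ?addr0 //.
  by rewrite kj andbF mul0r.
have Md (N : 'M[F]_n) u v : (N *m delta_mx i j) u v = N u i * (v == j)%:R.
  rewrite mxE (bigD1 i) //= big1 => [|k /negPf ki]; rewrite !mxE ?eqxx ?addr0 //.
  by rewrite ki mulr0.
rewrite /elemmx mulmxDl mul1mx !mulmxDr mulmx1 -!scalemxAl -!scalemxAr.
rewrite !(dM, Md, mxE); ring.
Qed.

End Similarity.

Section Fillmore.
Variable F : fieldType.

Lemma exists_simmx_col0_neq0 k (M : 'M[F]_k.+2) : ~~ is_scalar_mx M ->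
  exists N a, [/\ M ~_{in unitmx} N, a != 0 & N a 0 != 0].
Proof.
move=> nscM.
case: (pickP (fun ij : 'I_k.+2 * 'I_k.+2 => (ij.1 != ij.2) && (M ij.2 ij.1 != 0))).
  move=> [i j] /andP[ij Mji] /=.
  exists (\matrix_(x, y) M (tperm 0 i x) (tperm 0 i y)), (tperm 0 i j).
  split; first exact: simmx_perm.
    by rewrite -[X in _ != X](tpermR 0 i) (inj_eq perm_inj) eq_sym.
  by rewrite mxE tpermK tpermL.
move=> offM; have {}offM x y : x != y -> M x y = 0.
  by move=> xy; apply/eqP; have /= := offM (y, x); rewrite eq_sym xy => /negbFE.
have [a Maa] : exists a, M a a != M 0 0.
  case: (pickP (fun a => M a a != M 0 0)) => [a|diagM]; first by exists a.
  case/negP: nscM; rewrite [M](_ : _ = (M 0 0)%:M) ?scalar_mx_is_scalar //.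
  apply/matrixP => x y; have [<-|xy] := eqVneq x y; rewrite mxE ?eqxx ?(negPf xy).
    by rewrite mulr1n; apply/eqP/negbFE/diagM.
  by rewrite mulr0n offM.
have a0 : a != 0 by apply: contraNneq Maa => ->.
exists (elemmx a 0 1 *m M *m elemmx a 0 (- 1)), a; split.
- exact: simmx_elemmx.
- exact: a0.
rewrite elemmx_conjE eqxx (offM a 0 a0) (offM 0 a) 1?eq_sym //.
by rewrite !(mul1r, mulr1, mulr0, mul0r, add0r, subr0) eq_sym subr_eq0 eq_sym.
Qed.

Lemma exists_simmx_corner0 k (M : 'M[F]_k.+2) : ~~ is_scalar_mx M ->
  exists N a, [/\ M ~_{in unitmx} N, N 0 0 = 0, a != 0 & N a 0 != 0].
Proof.
move=> /exists_simmx_col0_neq0[N [a [simMN a0 Na0]]].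
have /negPf a0F := a0; have /negPf a0F' : (0 : 'I_k.+2) != a by rewrite eq_sym.
set t := - (N 0 0 / N a 0).
exists (elemmx 0 a t *m N *m elemmx 0 a (- t)), a; split => //.
- by apply: simmx_trans simMN _; apply: simmx_elemmx; rewrite eq_sym.
- rewrite elemmx_conjE eqxx a0F' !(mul0r, mulr0, mul1r, subr0).
  by rewrite /t mulNr divfK // addrN.
by rewrite elemmx_conjE a0F a0F' !(mul0r, mulr0, subr0, addr0).
Qed.

Lemma exists_simmx_corner0_offdiag k (N : 'M[F]_k.+3) a :
    a != 0 -> N a 0 != 0 -> N 0 0 = 0 ->
  exists N' x y, [/\ N ~_{in unitmx} N', N' 0 0 = 0, x != y
                   & N' (lift 0 x) (lift 0 y) != 0].
Proof.
move=> a0 Na0 N00.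
(* Conjugating by 1 + t E_ba clears the entry (b, 0); conjugating then by
   1 + E_0b keeps the corner 0 and puts - N a 0 at the off-diagonal (a, b). *)
have [a' Da] : exists a' : 'I_k.+2, a = lift 0 a'.
  by case: (unliftP 0 a) a0 => [a' ->|->]; [exists a' | rewrite eqxx].
have [b' ba'] : exists b' : 'I_k.+2, b' != a'.
  by case: (eqVneq a' 0) => [->|]; [exists ord_max | exists 0; rewrite eq_sym].
have [Nab|Nab] := eqVneq (N a (lift 0 b')) 0; last first.
  by exists N, a', b'; split; rewrite -?Da //; [exact: simmx_refl | rewrite eq_sym].
set b := lift 0 b' in Nab *.
have /negPf b0 : b != 0 by rewrite eq_sym neq_lift.
have /negPf ab : a != b by rewrite Da (inj_eq lift_inj) eq_sym.
have /negPf ba : b != a by rewrite eq_sym ab.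
have /negPf a0F := a0; have /negPf a0F' : (0 : 'I_k.+3) != a by rewrite eq_sym.
set t := - (N b 0 / N a 0); set N1 := elemmx b a t *m N *m elemmx b a (- t).
have N1_00 : N1 0 0 = 0.
  by rewrite elemmx_conjE eq_sym b0 a0F' !(mul0r, mulr0, subr0, addr0).
have N1_b0 : N1 b 0 = 0.
  rewrite elemmx_conjE eqxx a0F' !(mul1r, mulr0, subr0).
  by rewrite /t mulNr divfK // addrN.
have N1_a0 : N1 a 0 = N a 0.
  by rewrite elemmx_conjE ab a0F' !(mul0r, mulr0, subr0, addr0).
have N1_ab : N1 a b = 0.
  by rewrite elemmx_conjE ab ba Nab !(mul0r, mulr0, subr0, addr0).
exists (elemmx 0 b 1 *m N1 *m elemmx 0 b (- 1)), a', b'; split => //.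
- by apply: simmx_trans (simmx_elemmx t N (negbT ba)) (simmx_elemmx 1 N1 _); rewrite eq_sym b0.
- by rewrite elemmx_conjE eqxx eq_sym b0 N1_00 N1_b0 !(mulr0, mul0r, subr0, addr0).
- by rewrite eq_sym.
rewrite -Da elemmx_conjE a0F eqxx N1_ab N1_a0 !(mul0r, mulr0, mul1r, mulr1, add0r, subr0).
by rewrite oppr_eq0.
Qed.

Lemma exists_simmx_corner0_nonscalar m (M : 'M[F]_m.+2) : ~~ is_scalar_mx M ->
  exists2 N : 'M_(1 + m.+1), M ~_{in unitmx} N &
    ulsubmx N = 0 /\ ((0 < m)%N -> ~~ is_scalar_mx (drsubmx N)).
Proof.
suff corner0 (N : 'M[F]_(1 + m.+1)) : N 0 0 = 0 -> ulsubmx N = 0.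
  case: m => [|m] in M corner0 *;
    move=> /exists_simmx_corner0[N [a [simMN N00 a0 Na0]]].
    by exists N => //; split=> //; apply: corner0.
  have [N' [x [y [simNN' N'00 xy N'xy]]]] := exists_simmx_corner0_offdiag a0 Na0 N00.
  exists N'; first exact: simmx_trans simMN simNN'.
  split=> [|_]; first exact: corner0.
  apply/negP => /is_scalar_mxP[c Bc]; move: N'xy.
  have -> : N' (lift 0 x) (lift 0 y) = drsubmx (N' : 'M_(1 + m.+2)) x y.
    by rewrite !mxE !rshift1.
  by rewrite Bc mxE (negPf xy) mulr0n eqxx.
move=> N00; apply/matrixP => i j; rewrite !ord1 !mxE -[RHS]N00.
by congr (N _ _); apply: val_inj.
Qed.

Lemma simmx_drsubmx l m (N : 'M[F]_(l + m)) B : drsubmx N ~_{in unitmx} B ->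
  exists2 N', N ~_{in unitmx} N' & ulsubmx N' = ulsubmx N /\ drsubmx N' = B.
Proof.
move=> [P Pu /(simmxRL Pu) ->].
exists (block_mx 1%:M 0 0 P *m N *m block_mx 1%:M 0 0 (invmx P)).
  apply: simmx_mulmx.
  by rewrite mulmx_block !(mulmx0, mul0mx, mulmx1, addr0, add0r) mulVmx // -scalar_mx_block.
rewrite -[N in block_mx _ _ _ _ *m N]submxK !mulmx_block.
by rewrite !(mulmx0, mul0mx, mulmx1, mul1mx, addr0, add0r) block_mxKul block_mxKdr.
Qed.

Lemma submx_diag0 l m (N : 'M[F]_(l + m)) :
  (forall i, ulsubmx N i i = 0) -> (forall i, drsubmx N i i = 0) ->
  forall i, N i i = 0.
Proof.
move=> ul0 dr0 i; rewrite -(splitK i).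
by case: split => j; [rewrite -(ul0 j) | rewrite -(dr0 j)]; rewrite !mxE.
Qed.

Lemma mxtrace_submx l m (N : 'M[F]_(l + m)) :
  \tr N = \tr (ulsubmx N) + \tr (drsubmx N).
Proof. by rewrite -{1}(submxK N) mxtrace_block. Qed.

Theorem exists_simmx_diag0 m (M : 'M[F]_m.+2) : ~~ is_scalar_mx M -> \tr M = 0 ->
  exists2 N, M ~_{in unitmx} N & forall i, N i i = 0.
Proof.
elim: m M => [|m IH] M /exists_simmx_corner0_nonscalar[N simMN [ulN nscB]] trM.
all: have ul0 i : ulsubmx N i i = 0 by rewrite ulN mxE.
all: have trB : \tr (drsubmx N) = 0
       by move: trM; rewrite -(simmx_mxtrace simMN) (mxtrace_submx N) ulN mxtrace0 add0r.
  by exists N => //; apply: (@submx_diag0 1 1) => // i; rewrite ord1 -trace_mx11.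
have [B' simB B'0] := IH _ (nscB isT) trB.
have [N' simNN' [ulN' drN']] := simmx_drsubmx simB.
exists N'; first exact: simmx_trans simMN simNN'.
by apply: (@submx_diag0 1 m.+2) => i; rewrite ?ulN' ?drN'.
Qed.

End Fillmore.

Section InfiniteField.
Variables (F : fieldType) (hF : infinite_field F).

Lemma infinite_field_nonroot (q : {poly F}) : q != 0 -> exists x, ~~ root q x.
Proof.
move=> q0; have [s [size_s uniq_s]] : exists s : seq F, size s = size q /\ uniq s.
  elim: (size q) => [|k [s [size_s uniq_s]]]; first by exists [::].
  by have [x xs] := hF s; exists (x :: s); rewrite /= size_s xs.
have /allPn[x _ qx] : ~~ all (root q) s.
  by apply/negP => /(max_poly_roots q0)/(_ uniq_s); rewrite size_s ltnn.
by exists x.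
Qed.

Lemma exists_seq_uniq_horner (p : {poly F}) k : (1 < size p)%N ->
  exists2 s : seq F, size s = k & uniq [seq p.[x] | x <- s].
Proof.
move=> p_gt1; elim: k => [|k [s size_s uniq_ps]]; first by exists [::].
pose q := \prod_(y <- s) (p - (p.[y])%:P).
have [|x qx] := @infinite_field_nonroot q.
  rewrite prodf_seq_neq0; apply/allP => y _ /=; rewrite subr_eq0.
  by apply/eqP => pE; move: p_gt1; rewrite pE size_polyC; case: (_ != 0).
exists (x :: s); first by rewrite /= size_s.
rewrite /= uniq_ps andbT; apply: contra qx => /mapP[y ys pxy].
by rewrite /root horner_prod prodf_seq_eq0; apply/hasP; exists y; rewrite // !hornerE pxy subrr.
Qed.

End InfiniteField.

Section Eigen.
Variables (F : fieldType) (n : nat).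
Implicit Types (T : 'M[F]_n).

Lemma eigenvalue_trmx T a : eigenvalue T^T a = eigenvalue T a.
Proof.
by rewrite /eigenvalue /eigenspace !kermx_eq0 /row_free -mxrank_tr raddfB /= tr_scalar_mx trmxK.
Qed.

Lemma eigenvalue_trig_mx T i : is_trig_mx T -> eigenvalue T (T i i).
Proof.
move=> /char_poly_trig chT; rewrite eigenvalue_root_char chT /root horner_prod.
by apply/prodf_eq0; exists i => //; rewrite hornerXsubC subrr.
Qed.

Lemma simmx_diag_eigenvalues T (d : 'rV[F]_n) :
  injective (d 0) -> (forall i, eigenvalue T (d 0 i)) -> T ~_{in unitmx} diag_mx d.
Proof.
move=> d_inj /(_ _)/eigenvalueP eigT.
have /fin_all_exists[v vE] : forall i, exists v : 'rV_n, v *m T = d 0 i *: v /\ v != 0.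
  by move=> i; have [v ? ?] := eigT i; exists v.
pose P := \matrix_i v i.
have PT : P *m T = diag_mx d *m P.
  apply/row_matrixP => i; rewrite row_mul rowK mul_diag_mx (proj1 (vE i)).
  by apply/rowP => j; rewrite !mxE.
suff Pu : P \in unitmx by exists P => //; apply/simmxP.
rewrite -row_free_unit -kermx_eq0; apply/rowV0P => x.
rewrite sub_kermx mulmx_sum_row => /eqP sum0; apply/rowP => i; rewrite mxE.
have /mxdirect_sumsP/(_ i isT) cap0 :=
  @mxdirect_sum_eigenspace F _ _ T predT (d 0) (in2W d_inj).
have xv_eig j : (x 0 j *: v j <= eigenspace T (d 0 j))%MS.
  by apply/eigenspaceP; rewrite -scalemxAl (proj1 (vE j)) !scalerA mulrC.
have : (x 0 i *: v i <= eigenspace T (d 0 i) :&: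
        \sum_(j | predT j && (j != i)) eigenspace T (d 0 j))%MS.
  rewrite sub_capmx xv_eig /=.
  move: sum0; rewrite (bigD1 i) //= rowK => /eqP; rewrite addr_eq0 => /eqP ->.
  by rewrite eqmx_opp summx_sub_sums // => j _; rewrite rowK xv_eig.
rewrite cap0 submx0 scalemx_eq0 => /orP[/eqP // | v0].
by have := proj2 (vE i); rewrite v0.
Qed.

End Eigen.

Section PCommutatorImage.
Variables (F : fieldType) (n : nat) (p : {poly F}).
Implicit Types (A B M N P Q X : 'M[F]_n.+1).

Lemma mxtrace_horner_mulmxC A B :
  \tr (horner_mx (A *m B) p) = \tr (horner_mx (B *m A) p).
Proof.
have mulrXC (C D : 'M_n.+1) i : C * (D * C) ^+ i = (C * D) ^+ i * C.
  elim: i => [|i IH]; first by rewrite !expr0 mulr1 mul1r.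
  by rewrite exprS !mulrA -(mulrA (C * D)) IH mulrA -exprS.
have trX i : \tr ((A *m B) ^+ i) = \tr ((B *m A) ^+ i).
  case: i => [|i]; first by rewrite !expr0.
  by rewrite !mulmxE exprS -mulrA mulrXC -!mulmxE mxtrace_mulC !mulmxE -mulrA -exprSr.
rewrite -[p]coefK poly_def !raddf_sum /=; apply: eq_bigr => i _.
by rewrite !horner_mxZ !rmorphXn /= !horner_mx_X !mxtraceZ trX.
Qed.

Lemma p_commutator_image_simmx M N :
  M ~_{in unitmx} N -> p_commutator_image p N -> p_commutator_image p M.
Proof.
move=> [P Pu /(simmxP Pu) PM] [A [B NE]].
have -> : M = invmx P *m N *m P by rewrite -mulmxA -PM mulKmx.
exists (invmx P *m A *m P), (invmx P *m B *m P).
have conjM C D : invmx P *m C *m P *m (invmx P *m D *m P) = invmx P *m (C *m D) *m P.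
  by rewrite !mulmxA mulmxK.
by rewrite !conjM !horner_mx_uconjC // NE mulmxBr mulmxBl.
Qed.

Lemma p_commutator_image_conj_sub X P Q : P \in unitmx -> Q \in unitmx ->
  p_commutator_image p
    (invmx P *m horner_mx X p *m P - invmx Q *m horner_mx X p *m Q).
Proof.
move=> Pu Qu; exists (invmx P *m Q), (invmx Q *m X *m P).
by rewrite !mulmxA !mulmxK // !horner_mx_uconjC.
Qed.

Lemma diag0_p_commutator_image N : infinite_field F -> (1 < size p)%N ->
  (forall i, N i i = 0) -> p_commutator_image p N.
Proof.
move=> hF p_gt1 N0.
have [s size_s uniq_ps] := exists_seq_uniq_horner hF n.+1 p_gt1.
pose d : 'rV_n.+1 := \row_i p.[s`_i].
have d_inj : injective (d 0).
  move=> i j; rewrite !mxE => pij; apply: val_inj; apply/eqP.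
  rewrite -(nth_uniq 0 _ _ uniq_ps) ?size_map ?size_s ?ltn_ord //.
  by rewrite !(nth_map (0 : F)) ?size_s //= pij.
have [W [W_diag W_trig WN_trig]] : exists W : 'M_n.+1,
    [/\ (forall i, W i i = d 0 i), is_trig_mx W^T & is_trig_mx (W - N)].
  exists (diag_mx d + \matrix_(i, j) (if (i < j)%N then N i j else 0)); split.
  - by move=> i; rewrite !mxE eqxx ltnn mulr1n addr0.
  - apply/is_trig_mxP => j k jk; rewrite !mxE.
    by rewrite -(inj_eq val_inj) /= (gtn_eqF jk) mulr0n add0r ltnNge ltnW.
  - apply/is_trig_mxP => j k jk; rewrite !mxE.
    by rewrite -(inj_eq val_inj) /= (ltn_eqF jk) jk mulr0n add0r subrr.
have simW : W ~_{in unitmx} diag_mx d.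
  apply: simmx_diag_eigenvalues => // i.
  by rewrite -eigenvalue_trmx -W_diag; have := eigenvalue_trig_mx i W_trig; rewrite mxE.
have simWN : W - N ~_{in unitmx} diag_mx d.
  apply: simmx_diag_eigenvalues => // i.
  rewrite -W_diag -[W i i]subr0 -(N0 i).
  by have := eigenvalue_trig_mx i WN_trig; rewrite !mxE.
have hD : horner_mx (diag_mx (\row_i s`_i)) p = diag_mx d.
  by rewrite horner_mx_diag; congr diag_mx; apply/rowP => i; rewrite !mxE.
have [P Pu /(simmxP Pu) PW] := simW; have [Q Qu /(simmxP Qu) QWN] := simWN.
rewrite -[N](subKr W) -[W in W - _](mulKmx Pu) -[W - N](mulKmx Qu) PW QWN -hD !mulmxA.
exact: p_commutator_image_conj_sub.
Qed.

Lemma p_commutator_image_mxtrace M : p_commutator_image p M -> \tr M = 0.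
Proof. by move=> [A [B ->]]; rewrite raddfB /= mxtrace_horner_mulmxC subrr. Qed.

Lemma mxtrace0_scalar_eq0 M :
  [pchar F] =i pred0 -> is_scalar_mx M -> \tr M = 0 -> M = 0.
Proof.
move=> pchar0 /is_scalar_mxP[a ->]; rewrite mxtrace_scalar -mulr_natr => /eqP.
by rewrite mulf_eq0 ((pcharf0P _).1 pchar0) orbF => /eqP ->; rewrite raddf0.
Qed.

End PCommutatorImage.

Theorem corollary3p5 (F : fieldType) (n : nat) (p : {poly F})
  (hF : infinite_field F) (hn : (1 < n.+1)%N) (hp : (1 < size p)%N) :
  (forall M : 'M[F]_n.+1,
     ~~ is_scalar_mx M -> \tr M = 0 -> p_commutator_image p M)
  /\
  ([pchar F] =i pred0 ->
     forall M : 'M[F]_n.+1, p_commutator_image p M <-> \tr M = 0).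
Proof.
case: n hn => [|m] // _.
have nonscalar (M : 'M[F]_m.+2) :
    ~~ is_scalar_mx M -> \tr M = 0 -> p_commutator_image p M.
  move=> nscM /(exists_simmx_diag0 nscM)[N simMN N0].
  exact: p_commutator_image_simmx simMN (diag0_p_commutator_image hF hp N0).
split=> // pchar0 M; split; first exact: p_commutator_image_mxtrace.
move=> trM; have [scM|nscM] := boolP (is_scalar_mx M); last exact: nonscalar.
by rewrite (mxtrace0_scalar_eq0 pchar0 scM trM); exists 0, 0; rewrite subrr.
Qed.
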